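(* For all integers $k\ge 1$ and $t\ge 1$, $$B_0(k,2t)+B_1(k+1,2t+1)=B_0(k,2t-2k)+p_{de}(2t-k)+p_{do}(2t-2k).$$
   Context: For a partition $\pi$, $s(\pi)$ is its smallest part. For $j\ge1$, $\mathrm{Spt}j_{do}(n)$ is the set of partitions $\pi$ of $n$ in which $s(\pi)$ occurs exactly $j$ times and the remaining parts (those larger than $s(\pi)$) are pairwise distinct and each has parity different from that of $s(\pi)$. $B_0(j,n)$ (resp. $B_1(j,n)$) is the number of $\pi\in\mathrm{Spt}j_{do}(n)$ whose number of parts greater than $s(\pi)$ is even (resp. odd); $B_0(j,n)=B_1(j,n)=0$ for $n\le 0$. $p_{de}(n)$ (resp. $p_{do}(n)$) is the number of partitions of $n$ into distinct even (resp. distinct odd) parts, with value $1$ at $n=0$ and $0$ for $n<0$. *)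

From mathcomp Require Import all_boot all_order all_algebra.
Set Implicit Arguments. Unset Strict Implicit. Unset Printing Implicit Defensive.

(* A partition of n is represented by its multiplicity vector:
   m : {ffun 'I_n -> 'I_n.+1}, where m i is the number of times the part
   (i.+1) occurs; it is a partition of n iff sum_i (i.+1) * m i = n. *)
Definition mpart (n : nat) := {ffun 'I_n -> 'I_n.+1}.

Definition is_partition (n : nat) (m : mpart n) : bool :=
  \sum_(i < n) i.+1 * (m i : nat) == n.

(* pi in Spt j_do(n), with smallest part s.+1 (index s), and the number of
   parts larger than the smallest part has parity b. *)
Definition sptjdo_par (j n : nat) (b : bool) (m : mpart n) : bool :=
  is_partition m &&
  [exists s : 'I_n,
    [&& 0 < (m s : nat), (m s : nat) == j,
        [forall i : 'I_n, (i < s) ==> ((m i : nat) == 0)],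
        [forall i : 'I_n, (s < i) ==>
            (((m i : nat) <= 1) && ((0 < (m i : nat)) ==> (odd i.+1 != odd s.+1)))]
      & odd (\sum_(i < n | s < i) (m i : nat)) == b]].

Definition Bcount (b : bool) (j n : nat) : nat :=
  #|[set m : mpart n | sptjdo_par j b m]|.

Definition B0 (j : nat) (n : int) : nat :=
  match n with Posz m => Bcount false j m | Negz _ => 0 end.
Definition B1 (j : nat) (n : int) : nat :=
  match n with Posz m => Bcount true j m | Negz _ => 0 end.

Definition distinct_par (odd_parts : bool) (n : nat) (m : mpart n) : bool :=
  is_partition m &&
  [forall i : 'I_n, ((m i : nat) <= 1) &&
                    ((0 < (m i : nat)) ==> (odd i.+1 == odd_parts))].

Definition pdcount (odd_parts : bool) (n : nat) : nat :=
  #|[set m : mpart n | distinct_par odd_parts m]|.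

Definition pde (n : int) : nat :=
  match n with Posz m => pdcount false m | Negz _ => 0 end.
Definition pdo (n : int) : nat :=
  match n with Posz m => pdcount true m | Negz _ => 0 end.

From mathcomp Require Import all_boot all_order all_algebra.
From mathcomp Require Import zify.
Import GRing.Theory.
Set Implicit Arguments. Unset Strict Implicit. Unset Printing Implicit Defensive.

(* A partition in Spt j_do(n) is determined by its smallest part s and the set D of
   its larger parts: distinct parts above s of the opposite parity, with j * s + sum D = n.
   Fix s and split the sets D counted by B_0(k, 2t - 2k) according to whether s + 1 lies
   in D.  If not, (s + 2, D) is counted by B_0(k, 2t); if so, (s + 2, D minus s + 1) is
   counted by B_1(k + 1, 2t + 1), and this is a bijection onto the terms of smallest part
   s + 2.  Run with s = 0, the same shift turns the partitions of 2t - 2k into distinct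
   odd parts (an even number of them) into the terms with smallest part 2; the terms
   with smallest part 1 together are the partitions of 2t - k into distinct even parts. *)

Lemma card_in_bij (T T' : finType) (A : {set T}) (B : {set T'})
    (f : T -> T') (g : T' -> T) :
  {in A, forall x, f x \in B} -> {in B, forall y, g y \in A} ->
  {in A, cancel f g} -> {in B, cancel g f} -> #|A| = #|B|.
Proof.
move=> fAB gBA fK gK; apply/eqP; rewrite eqn_leq.
have f_inj : {in A &, injective f} by move=> x y xA yA /(congr1 g); rewrite !fK.
have g_inj : {in B &, injective g} by move=> x y xB yB /(congr1 f); rewrite !gK.
rewrite -{1}(card_in_imset f_inj) -[X in _ && (X <= _)](card_in_imset g_inj).
by apply/andP; split; apply/subset_leq_card/subsetP => _ /imsetP[x xA ->]; auto.
Qed.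

Lemma card_exists_unique (T I : finType) (P : pred T) (Q : I -> pred T) :
  (forall x i i', Q i x -> Q i' x -> i = i') ->
  #|[set x | P x && [exists i, Q i x]]| = \sum_i #|[set x | P x && Q i x]|.
Proof.
move=> Q_uniq; rewrite -sum1_card big_mkcond /=.
under eq_bigr => x _ do rewrite inE.
under [RHS]eq_bigr => i _ do rewrite -sum1_card big_mkcond /=.
rewrite exchange_big /=; apply: eq_bigr => x _.
case: (boolP [exists i, Q i x]) => [/existsP[i0 Qi0] | /existsPn noQ]; last first.
  by rewrite andbF big1 // => i _; rewrite inE (negbTE (noQ i)) andbF.
rewrite (bigD1 i0) //= big1 => [|i ne_i]; first by rewrite !inE Qi0 addn0.
rewrite inE; case: (boolP (Q i x)) => [/(Q_uniq _ _ _ Qi0) i0i|]; last by rewrite andbF.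
by rewrite i0i eqxx in ne_i.
Qed.

Lemma match_subz (F : nat -> nat) (a c : nat) :
  match (a%:Z - c%:Z)%R with Posz m => F m | Negz _ => 0 end
  = if c <= a then F (a - c) else 0.
Proof.
case: leqP => [ca|ac]; first by rewrite subzn.
by rewrite -opprB subzn ?(ltnW ac) // -(prednK (_ : 0 < c - a)) ?subn_gt0.
Qed.

Section PartSets.

Variable N : nat.
Implicit Types (D : {set 'I_N.+1}) (s c a : nat) (b : bool).

Definition sum_parts D : nat := \sum_(d in D) (d : nat).

Definition alt_above s D : bool := [forall d in D, (s < d) && (odd d != odd s)].

(* [dsets_par s b (j * s) n] holds the sets of larger parts of the partitions in
   Spt j_do(n) with smallest part s whose number of larger parts has parity b; with
   s = 0 (resp. 1) and no offset, [dsets] holds the partitions into distinct odd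
   (resp. even) parts. *)
Definition dsets s c a := [set D | alt_above s D && (c + sum_parts D == a)].

Definition dsets_par s b c a :=
  [set D | [&& alt_above s D, odd #|D| == b & c + sum_parts D == a]].

Lemma alt_aboveP s D :
  reflect (forall d, d \in D -> s < d /\ odd d != odd s) (alt_above s D).
Proof.
by apply: (iffP forall_inP) => sD d /sD; [case/andP | case=> -> ->].
Qed.

Lemma card_dsets s c a :
  #|dsets s c a| = #|dsets_par s false c a| + #|dsets_par s true c a|.
Proof.
rewrite -(cardsID [set D : {set 'I_N.+1} | odd #|D|] (dsets s c a)) addnC.
by congr (_ + _); apply: eq_card => D; rewrite !inE; case: odd; rewrite ?andbT ?andbF.
Qed.

Lemma dsets_parS s b c a : dsets_par s b c.+1 a.+1 = dsets_par s b c a.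
Proof. by apply/setP => D; rewrite !inE addSn eqSS. Qed.

Lemma dsets_par_gt s b c a : a < c -> dsets_par s b c a = set0.
Proof.
move=> lt_ac; apply/setP => D; rewrite !inE; apply/and3P => -[_ _ /eqP sum_D].
by move: lt_ac; rewrite -sum_D ltnNge leq_addr.
Qed.

Lemma card_dsets_par_offset s b c x a :
  #|dsets_par s b (c + x) a| = if c <= a then #|dsets_par s b x (a - c)| else 0.
Proof.
case: leqP => [ca|ac].
  by apply: eq_card => D; rewrite !inE -addnA; congr [&& _, _ & _]; apply/eqP/eqP; lia.
by rewrite dsets_par_gt ?cards0 // (leq_trans ac) ?leq_addr.
Qed.

Lemma card_dsets_offset s c x a :
  #|dsets s (c + x) a| = if c <= a then #|dsets s x (a - c)| else 0.
Proof. by rewrite !card_dsets !card_dsets_par_offset; case: ifP. Qed.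

Lemma sum_partsU1 (e : 'I_N.+1) D : e \notin D -> sum_parts (e |: D) = e + sum_parts D.
Proof. exact: big_setU1. Qed.

Lemma sum_partsD1 (e : 'I_N.+1) D : e \in D -> sum_parts D = e + sum_parts (D :\ e).
Proof. exact: big_setD1. Qed.

Lemma leq_sum_parts D (d : 'I_N.+1) : d \in D -> d <= sum_parts D.
Proof. by move=> dD; rewrite /sum_parts (bigD1 d) //= leq_addr. Qed.

Lemma odd_sum_parts s D :
  ~~ odd s -> alt_above s D -> odd (sum_parts D) = odd #|D|.
Proof.
move=> even_s /alt_aboveP sD; rewrite -sum1_card /sum_parts.
rewrite !(big_morph odd oddD (erefl : odd 0 = false)); apply: eq_bigr => d /sD[_].
by rewrite (negbTE even_s); case: odd.
Qed.

Lemma dsets_par_odd_eq0 s c a :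
  ~~ odd s -> odd c = odd a -> dsets_par s true c a = set0.
Proof.
move=> even_s odd_ca; apply/setP => D; rewrite !inE; apply/and3P => -[sD odd_D /eqP sum_D].
by move: odd_ca; rewrite -sum_D oddD (odd_sum_parts even_s sD) (eqP odd_D) addbT; case: odd.
Qed.

Section Shift.

Variables (s : nat) (lt_sN : s < N).
Let e : 'I_N.+1 := inord s.+1.
Let e_val : e = s.+1 :> nat. Proof. exact: inordK. Qed.

Lemma alt_aboveSS D : alt_above s.+2 D = alt_above s D && (e \notin D).
Proof.
apply/alt_aboveP/andP => [sD | [/alt_aboveP sD eD] d dD].
  split; first by apply/alt_aboveP => d /sD[lt_d]; rewrite /= negbK; split; [lia|].
  by apply/negP => /sD[]; rewrite e_val; lia.
have [lt_d odd_d] := sD d dD; rewrite /= negbK.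
have ne_de : (d : nat) != s.+1.
  by apply: contraNneq eD => de; have -> : e = d by apply: val_inj; rewrite /= inordK ?de.
have ne_d2 : (d : nat) != s.+2 by apply: contra odd_d => /eqP ->; rewrite /= negbK.
split; [lia | by move: odd_d; case: odd; case: odd].
Qed.

Lemma alt_aboveU1 D : alt_above s (e |: D) = alt_above s D.
Proof.
apply/alt_aboveP/alt_aboveP => sD d dD; first by apply: sD; rewrite setU1r.
case/setU1P: dD => [->|/sD //]; rewrite e_val /=; split; [exact: ltnSn | by case: odd].
Qed.

Lemma card_dsets_par_shift c a :
  #|dsets_par s false c a|
  = #|dsets_par s.+2 false c a| + #|dsets_par s.+2 true (c + s.+1) a|.
Proof.
rewrite -(cardsID [set D : {set 'I_N.+1} | e \in D] (dsets_par s false c a)) addnC; congr (_ + _).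
  by apply: eq_card => D; rewrite !inE alt_aboveSS -!andbA; do !bool_congr.
apply: (card_in_bij (f := fun D => D :\ e) (g := fun D => e |: D)).
- move=> D; rewrite !inE => /andP[/and3P[sD odd_D /eqP sum_D] eD].
  rewrite (cardsD1 e) eD (sum_partsD1 eD) e_val in odd_D sum_D.
  rewrite -(setD1K eD) alt_aboveU1 in sD.
  rewrite alt_aboveSS setD11 sD -addnA sum_D eqxx andbT.
  by move: odd_D; rewrite /=; case: odd.
- move=> D; rewrite !inE => /and3P[sD odd_D /eqP sum_D].
  rewrite alt_aboveSS in sD; case/andP: sD => sD eD.
  rewrite eqxx orTb andbT alt_aboveU1 sD cardsU1 eD (sum_partsU1 eD) e_val -sum_D.
  by rewrite /= addnA eqxx andbT; move: odd_D; case: odd.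
- by move=> D; rewrite !inE => /andP[_ eD]; rewrite setD1K.
- move=> D; rewrite inE => /and3P[]; rewrite alt_aboveSS => /andP[_ eD] _ _.
  exact: setU1K.
Qed.

End Shift.

End PartSets.

Section Encoding.

Variables (N n : nat) (le_nN : n <= N).
Implicit Types (D : {set 'I_N.+1}) (m : mpart n) (s j : nat).

(* Index [i : 'I_n] of a multiplicity vector stands for the part [i.+1]; the
   hypotheses [0 < s -> j <= n] below say that [j] copies of [s] fit in [mpart n]. *)
Definition mpart_of s j D : mpart n :=
  [ffun i : 'I_n => inord (if i.+1 == s then j else (inord i.+1 : 'I_N.+1) \in D)].

Definition parts_above s m : {set 'I_N.+1} :=
  [set d : 'I_N.+1 | (s < d) && [exists i : 'I_n, (i.+1 == d :> nat) && (0 < m i)]].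

Definition spt_shape s j m : bool :=
  [forall i : 'I_n, if i.+1 < s then (m i : nat) == 0
                    else if i.+1 == s then (m i : nat) == j else m i <= 1].

Lemma inord_part (i : 'I_n) : (inord i.+1 : 'I_N.+1) = i.+1 :> nat.
Proof. by rewrite inordK // ltnS (leq_trans (ltn_ord i)). Qed.

Lemma mpart_ofE s j D (i : 'I_n) : (0 < s -> j <= n) ->
  mpart_of s j D i = (if i.+1 == s then j else (inord i.+1 : 'I_N.+1) \in D) :> nat.
Proof.
move=> le_jn; rewrite ffunE inordK // ltnS.
case: eqP => [is_s | _]; first by apply: le_jn; rewrite -is_s.
by case: (_ \in D); rewrite // (leq_ltn_trans (leq0n i)).
Qed.

Lemma mem_parts_above s m (i : 'I_n) :
  ((inord i.+1 : 'I_N.+1) \in parts_above s m) = (s <= i) && (0 < m i).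
Proof.
rewrite inE inord_part ltnS; congr (_ && _); apply/existsP/idP => [[i' /andP[]]|pos_i].
  by move=> /eqP/succn_inj/val_inj <-.
by exists i; rewrite eqxx.
Qed.

Lemma sum_ord_parts D (F : nat -> nat) : {in D, forall d : 'I_N.+1, 0 < d <= n} ->
  \sum_(i < n) ((inord i.+1 : 'I_N.+1) \in D) * F i.+1 = \sum_(d in D) F d.
Proof.
move=> D_range; pose G d := ((inord d : 'I_N.+1) \in D) * F d.
have G_out d : d < N.+1 -> ~~ (0 < d <= n) -> G d = 0.
  rewrite /G => le_dN; apply: contraNeq => /eqP.
  by case: (boolP (_ \in D)) => // /D_range; rewrite inordK.
transitivity (\sum_(1 <= d < n.+1) G d); first by rewrite big_add1 big_mkord.
transitivity (\sum_(0 <= d < N.+1) G d); last first.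
  rewrite big_mkord [RHS]big_mkcond /=; apply: eq_bigr => d _.
  by rewrite /G inord_val; case: (d \in D); rewrite ?mul1n.
rewrite [RHS](big_cat_nat (n := 1)) // big_nat1 G_out // /= add0n.
rewrite [RHS](big_cat_nat (n := n.+1)) //= [X in _ = _ + X]big_nat_cond.
rewrite [X in _ = _ + X]big1 ?addn0 // => d /andP[/andP[lt_nd lt_dN] _].
by rewrite G_out // (ltn_geF lt_nd) andbF.
Qed.

Section Shape.

Variables (s j : nat) (le_sn : s <= n).

Lemma sum_mpart_of D : (0 < s -> j <= n) -> {in D, forall d : 'I_N.+1, s < d <= n} ->
  \sum_(i < n) i.+1 * mpart_of s j D i = j * s + sum_parts D.
Proof.
move=> le_jn D_range.
have D_part : {in D, forall d : 'I_N.+1, 0 < d <= n}.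
  by move=> d /D_range /andP[lt_sd ->]; rewrite (leq_ltn_trans (leq0n s)).
have sum_at_s : \sum_(i < n) (i.+1 == s) * (j * s) = j * s.
  case: s le_sn => [|s'] lt_sn; first by rewrite muln0 big1.
  transitivity (\sum_(i < n | i == s' :> nat) j * s'.+1).
    by rewrite [RHS]big_mkcond; apply: eq_bigr => i _; rewrite eqSS; case: (_ == _); rewrite ?mul1n.
  by rewrite (big_ord1_eq addn (fun=> j * s'.+1)) lt_sn.
rewrite /sum_parts -(@sum_ord_parts D id D_part) -sum_at_s -big_split /=.
apply: eq_bigr => i _; rewrite mpart_ofE //; case: eqP => [is_s | _]; last by rewrite mulnC.
suff -> : ((inord i.+1 : 'I_N.+1) \in D) = false by rewrite -is_s mul1n mulnC addn0.
by apply/negP => /D_range; rewrite inord_part is_s ltnn.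
Qed.

Lemma count_mpart_of D : (0 < s -> j <= n) -> {in D, forall d : 'I_N.+1, s < d <= n} ->
  \sum_(i < n | s <= i) mpart_of s j D i = #|D|.
Proof.
move=> le_jn D_range.
have D_part : {in D, forall d : 'I_N.+1, 0 < d <= n}.
  by move=> d /D_range /andP[lt_sd ->]; rewrite (leq_ltn_trans (leq0n s)).
rewrite -sum1_card -(@sum_ord_parts D (fun=> 1) D_part) big_mkcond /=.
apply: eq_bigr => i _; rewrite mpart_ofE // muln1; case: leqP => [le_si | lt_is].
  by rewrite gtn_eqF.
by case: (boolP (_ \in D)) => // /D_range; rewrite inord_part ltnS leqNgt lt_is.
Qed.

Lemma parts_above_mpart_of D : (0 < s -> j <= n) -> {in D, forall d : 'I_N.+1, s < d <= n} ->
  parts_above s (mpart_of s j D) = D.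
Proof.
move=> le_jn D_range; apply/setP => d; rewrite inE.
apply/andP/idP => [[lt_sd /existsP[i /andP[/eqP id]]] | dD].
  rewrite mpart_ofE // id (gtn_eqF lt_sd) lt0b.
  by rewrite inord_val.
have /andP[lt_sd le_dn] := D_range d dD; split => //.
have pos_d : 0 < d by rewrite (leq_ltn_trans (leq0n s)).
have lt_dn : d.-1 < n by rewrite prednK.
apply/existsP; exists (Ordinal lt_dn); rewrite /= prednK // eqxx mpart_ofE //.
by rewrite prednK // (gtn_eqF lt_sd) inord_val dD.
Qed.

Lemma spt_shape_le m : spt_shape s j m -> 0 < s -> j <= n.
Proof.
move=> /forallP shape_m pos_s; have lt_sn : s.-1 < n by rewrite prednK.
move: (shape_m (Ordinal lt_sn)); rewrite /= prednK // ltnn eqxx => /eqP <-.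
by rewrite -ltnS.
Qed.

Lemma mpart_of_parts_above m : spt_shape s j m -> mpart_of s j (parts_above s m) = m.
Proof.
move=> shape_m; have le_jn := spt_shape_le shape_m.
apply/ffunP => i; apply: ord_inj; rewrite mpart_ofE // mem_parts_above -ltnS.
move/forallP: shape_m => /(_ i); case: ltngtP => _ /=; [by move=> /eqP -> | | by move=> /eqP ->].
by case: (m i : nat) => [|[|]].
Qed.

Lemma parts_above_range m : {in parts_above s m, forall d : 'I_N.+1, s < d <= n}.
Proof.
by move=> d; rewrite inE => /andP[-> /existsP[i /andP[/eqP <- _]]]; exact: ltn_ord.
Qed.

Lemma spt_shape_mpart_of D : (0 < s -> j <= n) -> {in D, forall d : 'I_N.+1, s < d} ->
  spt_shape s j (mpart_of s j D).
Proof.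
move=> le_jn D_above; apply/forallP => i; rewrite mpart_ofE //.
case: ltngtP => // [lt_is | lt_si]; last by case: (_ \in D).
by case: (boolP (_ \in D)) => // /D_above; rewrite inord_part ltnNge (ltnW lt_is).
Qed.

Lemma weight_bounds D : {in D, forall d : 'I_N.+1, s < d} -> j * s + sum_parts D = n ->
  (0 < s -> j <= n) /\ {in D, forall d : 'I_N.+1, s < d <= n}.
Proof.
move=> D_above sum_D; split=> [pos_s | d dD].
  by rewrite -sum_D (leq_trans (leq_pmulr j pos_s)) ?leq_addr.
by rewrite D_above // -sum_D (leq_trans (leq_sum_parts dD)) ?leq_addl.
Qed.

Lemma card_spt_shape (P q : pred nat) :
  #|[set m : mpart n | [&& is_partition m, spt_shape s j m,
       [forall i : 'I_n, (s <= i) ==> (0 < m i) ==> P i.+1]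
     & q (\sum_(i < n | s <= i) m i)]]|
  = #|[set D : {set 'I_N.+1} | [&& [forall d in D, (s < d) && P d], q #|D|
                                 & j * s + sum_parts D == n]]|.
Proof.
apply: (card_in_bij (f := parts_above s) (g := mpart_of s j)).
- move=> m; rewrite !inE => /and4P[part_m shape_m /forallP P_m q_m].
  have le_jn := spt_shape_le shape_m; have m_range := @parts_above_range m.
  rewrite -(mpart_of_parts_above shape_m) (count_mpart_of le_jn m_range) in q_m.
  rewrite -(mpart_of_parts_above shape_m) /is_partition sum_mpart_of // in part_m.
  rewrite q_m part_m !andbT; apply/forall_inP => d.
  rewrite inE => /andP[lt_sd /existsP[i /andP[/eqP di pos_i]]].
  rewrite lt_sd -di; rewrite -di ltnS in lt_sd.
  exact: implyP (implyP (P_m i) lt_sd) pos_i.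
- move=> D; rewrite !inE => /and3P[/forall_inP D_P q_D /eqP sum_D].
  have [le_jn D_range] := weight_bounds (fun d dD => proj1 (andP (D_P d dD))) sum_D.
  rewrite /is_partition sum_mpart_of // sum_D eqxx count_mpart_of // q_D andbT /=.
  rewrite spt_shape_mpart_of //= => [|d /D_range /andP[] //].
  apply/forallP => i; apply/implyP => le_si; rewrite mpart_ofE // gtn_eqF // lt0b.
  by apply/implyP => /D_P /andP[_]; rewrite inord_part.
- by move=> m; rewrite inE => /and4P[_ shape_m _ _]; apply: mpart_of_parts_above.
- move=> D; rewrite inE => /and3P[/forall_inP D_P _ /eqP sum_D].
  have [le_jn D_range] := weight_bounds (fun d dD => proj1 (andP (D_P d dD))) sum_D.
  exact: parts_above_mpart_of.
Qed.

End Shape.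

End Encoding.

Section Counting.

Variable N : nat.

Definition spt_at n j b (s : 'I_n) (m : mpart n) : bool :=
  [&& 0 < (m s : nat), (m s : nat) == j,
      [forall i : 'I_n, (i < s) ==> ((m i : nat) == 0)],
      [forall i : 'I_n, (s < i) ==>
          (((m i : nat) <= 1) && ((0 < (m i : nat)) ==> (odd i.+1 != odd s.+1)))]
    & odd (\sum_(i < n | s < i) (m i : nat)) == b].

Lemma spt_at_uniq n j b (m : mpart n) (s s' : 'I_n) :
  spt_at j b s m -> spt_at j b s' m -> s = s'.
Proof.
move=> /and5P[pos_s _ below_s _ _] /and5P[pos_s' _ below_s' _ _].
case: (ltngtP s s') => [lt_ss' | lt_s's | /val_inj //].
  by move: (implyP (forallP below_s' s) lt_ss'); rewrite eqn0Ngt pos_s.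
by move: (implyP (forallP below_s s') lt_s's); rewrite eqn0Ngt pos_s'.
Qed.

Lemma spt_at_shape n j b (s : 'I_n) (m : mpart n) : 0 < j ->
  spt_at j b s m = [&& spt_shape s.+1 j m,
                      [forall i : 'I_n, (s < i) ==> (0 < m i) ==> (odd i.+1 != odd s.+1)]
                    & odd (\sum_(i < n | s < i) (m i : nat)) == b].
Proof.
move=> pos_j; apply/and5P/and3P => [[_ /eqP m_s /forallP below /forallP above par]
                                    | [/forallP shape /forallP above par]].
  split=> //; apply/forallP => i.
    rewrite ltnS eqSS; case: ltngtP => [lt_is | lt_si | /val_inj ->].
    - exact: implyP (below i) lt_is.
    - by case/andP: (implyP (above i) lt_si).
    - by rewrite m_s.
  by apply/implyP => lt_si; case/andP: (implyP (above i) lt_si).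
have m_s : (m s : nat) == j by move: (shape s); rewrite ltnn eqxx.
split=> //; first by rewrite (eqP m_s).
  apply/forallP => i; apply/implyP => lt_is.
  by move: (shape i); rewrite ltnS lt_is.
apply/forallP => i; apply/implyP => lt_si; rewrite (implyP (above i) lt_si) andbT.
by move: (shape i); rewrite ltnS eqSS ltnNge (ltnW lt_si) (gtn_eqF lt_si).
Qed.

Lemma Bcount_sum b j a : 0 < j -> a <= N ->
  Bcount b j a = \sum_(1 <= s < N.+1) #|dsets_par N s b (j * s) a|.
Proof.
move=> pos_j le_aN.
rewrite /Bcount /sptjdo_par (@card_exists_unique _ _ (@is_partition a) (spt_at j b)); last first.
  by move=> m s s'; apply: spt_at_uniq.
transitivity (\sum_(s < a) #|dsets_par N s.+1 b (j * s.+1) a|).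
  apply: eq_bigr => s _.
  have := card_spt_shape (N := N) le_aN j (ltn_ord s)
              (fun d => odd d != odd s.+1) (fun c => odd c == b).
  by move=> <-; apply: eq_card => m; rewrite !inE spt_at_shape.
transitivity (\sum_(1 <= s < a.+1) #|dsets_par N s b (j * s) a|).
  by rewrite big_add1 big_mkord.
rewrite [RHS](big_cat_nat (n := a.+1)) //= [X in _ = _ + X]big_nat_cond.
rewrite [X in _ = _ + X]big1 ?addn0 // => s /andP[/andP[lt_as _] _].
by rewrite dsets_par_gt ?cards0 // (leq_trans lt_as) // leq_pmull.
Qed.

(* [~~ o] read as a natural number is 0 for odd parts and 1 for even parts. *)
Lemma pdcount_dsets o a : a <= N -> pdcount o a = #|dsets N (~~ o) 0 a|.
Proof.
move=> le_aN; rewrite /pdcount.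
have := card_spt_shape (N := N) le_aN 0 (leq0n a) (fun d => odd d == o) xpredT.
move=> card_shape; etransitivity; [|etransitivity; [exact: card_shape|]]; clear card_shape.
  apply: eq_card => m; rewrite !inE andbT; congr andb.
  apply/forallP/andP => [distinct_m | [/forallP shape_m /forallP par_m] i].
    by split; apply/forallP => i; case/andP: (distinct_m i).
  by move: (shape_m i) (par_m i) => /= -> ->.
apply: eq_card => D; rewrite !inE mul0n !add0n; congr andb.
apply: eq_forallb_in => d _; case: o; first by rewrite /= eqb_id; case: odd.
by case: (val d) => [|[|d']] //=; case: odd.
Qed.

Lemma Bcount_offset b j c a : 0 < j -> a <= N ->
  (if c <= a then Bcount b j (a - c) else 0)
  = \sum_(1 <= s < N.+1) #|dsets_par N s b (c + j * s) a|.
Proof.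
move=> pos_j le_aN; under eq_bigr => s _ do rewrite card_dsets_par_offset.
case: leqP => [le_ca | lt_ac]; last by rewrite big1.
by rewrite Bcount_sum // (leq_trans (leq_subr c a)).
Qed.

Lemma pdcount_offset o c a : a <= N ->
  (if c <= a then pdcount o (a - c) else 0)
  = #|dsets_par N (~~ o) false c a| + #|dsets_par N (~~ o) true c a|.
Proof.
move=> le_aN; rewrite -card_dsets -[c]addn0 card_dsets_offset addn0.
by case: leqP => // _; rewrite pdcount_dsets // (leq_trans (leq_subr c a)).
Qed.

Lemma Bcount_pair_sum k a : 0 < k -> a < N ->
  Bcount false k a + Bcount true k.+1 a.+1
  = #|dsets_par N 1 false k a| + #|dsets_par N 1 true k a|
    + \sum_(0 <= s < N.-1) #|dsets_par N s false (2 * k + k * s) a|.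
Proof.
move=> pos_k lt_aN; rewrite !Bcount_sum ?(ltnW lt_aN) // -big_split /=.
rewrite big_ltn ?ltnS ?(leq_ltn_trans (leq0n a) lt_aN) //=.
rewrite !muln1 dsets_parS big_add1 big_add1 /=; congr (_ + _).
apply: eq_big_nat => s /andP[_ lt_s]; rewrite [RHS]card_dsets_par_shift; last first.
  by rewrite (leq_trans lt_s) // leq_pred.
rewrite (_ : k.+1 * s.+2 = (2 * k + k * s + s.+1).+1) ?dsets_parS; last lia.
by rewrite (_ : k * s.+2 = 2 * k + k * s); last lia.
Qed.

End Counting.

Theorem lemma4 (k t : nat) (hk : (1 <= k)%N) (ht : (1 <= t)%N) :
  (B0 k (2 * t)%N%:Z + B1 k.+1 (2 * t + 1)%N%:Z
   = B0 k ((2 * t)%:Z - (2 * k)%:Z)%R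
     + pde ((2 * t)%:Z - k%:Z)%R
     + pdo ((2 * t)%:Z - (2 * k)%:Z)%R)%N.
Proof.
pose N := (2 * t).+1; pose C s := #|dsets_par N s false (2 * k + k * s) (2 * t)|.
have C_tail : \sum_(1 <= s < N.+1) C s = \sum_(1 <= s < N.-1) C s.
  rewrite (big_cat_nat (n := N.-1)) /=; [|lia|lia].
  rewrite [X in _ + X]big_nat_cond [X in _ + X]big1 ?addn0 // => s /andP[/andP[le_ts _] _].
  by rewrite /C dsets_par_gt ?cards0 //; have := leq_pmull s hk; lia.
rewrite /B0 /B1 /pde /pdo !match_subz /= addn1 (Bcount_pair_sum (N := N)) //.
rewrite (Bcount_offset (N := N) _ _ hk) // (pdcount_offset (N := N) false k) //.
rewrite (pdcount_offset (N := N) true) // (dsets_par_odd_eq0 N (s := 0)) ?oddM //.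
rewrite -/(C _) C_tail (big_ltn (_ : 0 < N.-1)) /C ?muln0 ?addn0 ?cards0 /=; lia.
Qed.
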